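(* Let $\mathcal D=(C_1,C_2,C_3,C_4)$ be an ordered $4$-tuple of oriented circles in $\mathbb R^2$ (oriented lines allowed), and let $\mathbf M_{\mathcal D}$ be the real $4\times 3$ matrix whose $i$-th row is the curvature-center coordinate vector $\mathbf m(C_i)$. If $\mathcal D$ is an ordered, oriented Descartes configuration, then the first column of $\mathbf M=\mathbf M_{\mathcal D}$ is nonzero and $$\mathbf M^T\mathbf Q_D\mathbf M=\begin{pmatrix}0&0&0\\0&2&0\\0&0&2\end{pmatrix}.$$ Conversely, every real $4\times3$ matrix $\mathbf M$ with nonzero first column satisfying this equation equals $\mathbf M_{\mathcal D}$ for a unique ordered, oriented Descartes configuration $\mathcal D$.
   Context: An oriented circle is a circle together with a choice of unit normal pointing inward or outward. If it has radius $r$, its oriented curvature is $b=1/r$ for an inward normal and $b=-1/r$ for an outward normal; its interior is the open disk it bounds for an inward normal and the open exterior of that disk for an outward normal. A line is regarded as a circle of curvature $0$; an oriented line is a line with a chosen unit normal $\mathbf h=(h_1,h_2)$, and its interior is the open half-plane into which $\mathbf h$ points. A Descartes configuration is a set of four mutually tangent circles (lines allowed; two parallel lines count as tangent at $\infty$) with six distinct points of tangency. An oriented Descartes configuration is a Descartes configuration whose circles are oriented so that either the four interiors are pairwise disjoint, or they become pairwise disjoint after reversing all four orientations. Curvature-center coordinates: for an oriented circle with center $(x,y)$ and oriented curvature $b\neq0$, $\mathbf m(C)=(b,bx,by)$; for an oriented line with unit normal $\mathbf h$, $\mathbf m(C)=(0,h_1,h_2)$. The Descartes matrix is $\mathbf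 Q_D=\mathbf I-\tfrac12\mathbf 1\mathbf 1^T$, i.e. the $4\times4$ matrix with diagonal entries $1/2$ and off-diagonal entries $-1/2$. *)

From mathcomp Require Import all_boot all_order all_algebra.
From mathcomp Require Export reals.
Set Implicit Arguments. Unset Strict Implicit. Unset Printing Implicit Defensive.
Import Order.TTheory GRing.Theory Num.Theory.
Local Open Scope ring_scope.

(* An oriented (generalized) circle in R^2.
   - OCirc x y r inward : circle of center (x,y), radius r (> 0), with
     inward unit normal if [inward] is true, outward otherwise.
   - OLine h1 h2 c : the line {p | h1*p1 + h2*p2 = c} with unit normal
     h = (h1,h2) (h1^2+h2^2 = 1). *)
Inductive ocircle (R : Type) :=
| OCirc (x y r : R) (inward : bool)
| OLine (h1 h2 c : R).

Section Defs.
Variable R : realType.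

Definition valid_oc (C : ocircle R) : Prop :=
  match C with
  | OCirc _ _ r _ => 0 < r
  | OLine h1 h2 _ => h1 ^+ 2 + h2 ^+ 2 = 1
  end.

(* Points of the extended plane R^2 ∪ {∞}: None is the point at infinity. *)
Definition epoint := option (R * R).

Definition on_oc (C : ocircle R) (p : epoint) : Prop :=
  match C, p with
  | OCirc x y r _, Some (u, v) => (u - x) ^+ 2 + (v - y) ^+ 2 = r ^+ 2
  | OCirc _ _ _ _, None => False
  | OLine h1 h2 c, Some (u, v) => h1 * u + h2 * v = c
  | OLine _ _ _, None => True
  end.

Definition interior_oc (C : ocircle R) (p : R * R) : Prop :=
  let: (u, v) := p in
  match C with
  | OCirc x y r true => (u - x) ^+ 2 + (v - y) ^+ 2 < r ^+ 2
  | OCirc x y r false => r ^+ 2 < (u - x) ^+ 2 + (v - y) ^+ 2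
  | OLine h1 h2 c => c < h1 * u + h2 * v
  end.

Definition reverse_oc (C : ocircle R) : ocircle R :=
  match C with
  | OCirc x y r b => OCirc x y r (~~ b)
  | OLine h1 h2 c => OLine (- h1) (- h2) (- c)
  end.

(* Two generalized circles are tangent iff they have exactly one common
   point in R^2 ∪ {∞} (so two distinct parallel lines are tangent at ∞). *)
Definition tangent (C D : ocircle R) : Prop :=
  exists! p : epoint, on_oc C p /\ on_oc D p.

(* Descartes configuration (ordered): four mutually tangent circles with
   six distinct points of tangency. *)
Definition descartes (D : 'I_4 -> ocircle R) : Prop :=
  [/\ forall i, valid_oc (D i),
      forall i j, i != j -> tangent (D i) (D j) &
      forall (i j k l : 'I_4) (p : epoint),
        (i < j)%N -> (k < l)%N -> (i, j) != (k, l) ->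
        on_oc (D i) p -> on_oc (D j) p -> on_oc (D k) p -> on_oc (D l) p ->
        False].

Definition interiors_disjoint (D : 'I_4 -> ocircle R) : Prop :=
  forall i j, i != j -> forall p, interior_oc (D i) p -> interior_oc (D j) p -> False.

Definition oriented_descartes (D : 'I_4 -> ocircle R) : Prop :=
  descartes D /\
  (interiors_disjoint D \/ interiors_disjoint (fun i => reverse_oc (D i))).

Definition curv (C : ocircle R) : R :=
  match C with
  | OCirc _ _ r b => if b then r^-1 else - r^-1
  | OLine _ _ _ => 0
  end.

Definition mvec (C : ocircle R) : 'rV[R]_3 :=
  \row_(j < 3)
    match C with
    | OCirc x y r b =>
        let k := curv C in
        match nat_of_ord j with 0%N => k | 1%N => k * x | _ => k * y end
    | OLine h1 h2 _ =>
        match nat_of_ord j with 0%N => 0 | 1%N => h1 | _ => h2 end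
    end.

Definition MD (D : 'I_4 -> ocircle R) : 'M[R]_(4, 3) :=
  \matrix_(i < 4, j < 3) mvec (D i) 0 j.

Definition QD : 'M[R]_4 :=
  \matrix_(i < 4, j < 4) (if i == j then 2^-1 else - 2^-1).

Definition W3 : 'M[R]_3 :=
  \matrix_(i < 3, j < 3) (if (i == j) && (nat_of_ord i != 0%N) then 2 else 0).

End Defs.

From mathcomp Require Import all_boot all_order all_algebra reals.
From mathcomp Require Import ring lra.
Import Order.TTheory GRing.Theory Num.Theory.
Local Open Scope ring_scope.
Set Implicit Arguments. Unset Strict Implicit. Unset Printing Implicit Defensive.

(* Attach to an oriented circle C its augmented curvature-center coordinates
   w(C) = (cocurvature, b, b x, b y), where the cocurvature is the curvature of the image of C
   under inversion in the unit circle.  For the Wilker form Q_W one has Q_W(w(C), w(C)) = 1, and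
   Q_W(w(C), w(D)) = -1 when C and D are tangent with disjoint interiors; conversely this value
   forces tangency unless D is C with the opposite orientation.  Hence a Descartes configuration
   has Gram matrix W Q_W W^T = 2 I - J, and since (2 I - J) Q_D = 2 I this is equivalent to
   W^T Q_D W = 2 Q_W^-1; deleting the cocurvature column gives the stated relation.
   Conversely, the cocurvature column is recovered from M by an explicit formula, the rows of the
   resulting W are augmented coordinates of circles, and the geometric converses give tangency,
   the absence of triple points, and disjoint interiors after a global reversal chosen by the
   sign of the curvature sum.  A line is determined by its normal and its tangency to a circle
   of the configuration, which gives uniqueness. *)

Lemma gram_transpose (F : fieldType) n (c : F) (A B G H W : 'M[F]_n) :
  c != 0 -> A *m B = 1%:M -> G *m H = c%:M ->
  W *m A *m W^T = G -> W^T *m H *m W = c *: B.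
Proof.
move=> c0 AB GH WAW.
have WA_inv : (W *m A) *m (c^-1 *: (W^T *m H)) = 1%:M.
  by rewrite -scalemxAr mulmxA WAW GH scale_scalar_mx mulVf.
have WHWA : W^T *m H *m W *m A = c%:M.
  have := mulmx1C WA_inv; rewrite -scalemxAl !mulmxA => /(congr1 ( *:%R c)).
  by rewrite scalerA mulfV // scale1r scale_scalar_mx mulr1.
by rewrite -[LHS]mulmx1 -AB mulmxA WHWA mul_scalar_mx.
Qed.

Definition o0 : 'I_4 := @Ordinal 4 0 isT.
Definition o1 : 'I_4 := @Ordinal 4 1 isT.
Definition o2 : 'I_4 := @Ordinal 4 2 isT.
Definition o3 : 'I_4 := @Ordinal 4 3 isT.

Lemma ord4_cases (i : 'I_4) : [\/ i = o0, i = o1, i = o2 | i = o3].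
Proof.
by case: i => [[|[|[|[|n]]]] lt_i4]; [apply: Or41|apply: Or42|apply: Or43|apply: Or44|];
  rewrite // /o0 /o1 /o2 /o3; congr Ordinal; apply: bool_irrelevance.
Qed.

Ltac ord4_case i := case: (ord4_cases i) => ->.

Lemma distinct_pairs_third n (i j k l : 'I_n) : (i < j)%N -> (k < l)%N -> (i, j) != (k, l) ->
  exists2 t, [/\ i != j, t != i & t != j] & t = k \/ t = l.
Proof.
move=> lt_ij lt_kl kl_neq; have ij : i != j by rewrite neq_ltn lt_ij.
have [ki|ki] := eqVneq k i; last first.
  have [kj|kj] := eqVneq k j; last by exists k => //; left.
  have [li|li] := eqVneq l i.
    by move: lt_kl; rewrite kj li => lt_ji; move: (ltn_trans lt_ij lt_ji); rewrite ltnn.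
  have [lj|lj] := eqVneq l j; first by move: lt_kl; rewrite kj lj ltnn.
  by exists l => //; right.
have [li|li] := eqVneq l i; first by move: lt_kl; rewrite ki li ltnn.
have [lj|lj] := eqVneq l j; first by move: kl_neq; rewrite ki lj eqxx.
by exists l => //; right.
Qed.

Definition p0 : 'I_3 := @Ordinal 3 0 isT.
Definition p1 : 'I_3 := @Ordinal 3 1 isT.
Definition p2 : 'I_3 := @Ordinal 3 2 isT.

Lemma ord3_cases (i : 'I_3) : [\/ i = p0, i = p1 | i = p2].
Proof.
by case: i => [[|[|[|n]]] lt_i3]; [apply: Or31|apply: Or32|apply: Or33|];
  rewrite // /p0 /p1 /p2; congr Ordinal; apply: bool_irrelevance.
Qed.

Lemma sum4 (V : nmodType) (F : 'I_4 -> V) : \sum_(i < 4) F i = F o0 + F o1 + F o2 + F o3.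
Proof.
rewrite !big_ord_recl big_ord0 addr0 !addrA.
by congr (F _ + F _ + F _ + F _); apply: val_inj.
Qed.

Section Forms.
Variable R : realType.
Implicit Types (f g v w : 'I_4 -> R) (W : 'M[R]_4).

Definition sumf f := f o0 + f o1 + f o2 + f o3.

Lemma ord4_complement (i j : 'I_4) : i != j -> exists m n : 'I_4,
  [/\ m != i, m != j, n != i, n != j & m != n] /\
  (forall t, [\/ t = i, t = j, t = m | t = n]) /\
  forall f, sumf f = f i + f j + f m + f n.
Proof.
ord4_case i; ord4_case j => // _;
  [exists o2, o3|exists o1, o3|exists o1, o2|exists o2, o3|exists o0, o3|exists o0, o2
  |exists o1, o3|exists o0, o3|exists o0, o1|exists o1, o2|exists o0, o2|exists o0, o1];
  (split; [by []|split=> [t|f]; [|rewrite /sumf; ring]]);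
  by case: (ord4_cases t) => ->;
     first [by apply: Or41 | by apply: Or42 | by apply: Or43 | by apply: Or44].
Qed.

Definition formQD f g := sumf (fun i => f i * g i) - sumf f * sumf g / 2.

Definition formQW v w := - (v o0 * w o1 + v o1 * w o0) / 2 + v o2 * w o2 + v o3 * w o3.

Lemma formQD_sym f g : formQD f g = formQD g f.
Proof. rewrite /formQD /sumf; ring. Qed.

Lemma formQD_ext f f' g g' : f =1 f' -> g =1 g' -> formQD f g = formQD f' g'.
Proof. by move=> ff' gg'; rewrite /formQD /sumf !ff' !gg'. Qed.

Lemma formQD_self_sum0 f : formQD f f = 0 -> sumf f = 0 -> forall i, f i = 0.
Proof.
rewrite /formQD => ff0 sf0.
have sq0 : f o0 ^+ 2 + f o1 ^+ 2 + (f o2 ^+ 2 + f o3 ^+ 2) = 0.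
  by move: ff0; rewrite sf0 mul0r mul0r subr0 /sumf -!expr2 -!addrA.
move/eqP: sq0; rewrite !paddr_eq0 ?addr_ge0 ?sqr_ge0 // !sqrf_eq0.
by case/andP=> /andP[/eqP f0 /eqP f1] /andP[/eqP f2 /eqP f3] i; ord4_case i.
Qed.

Lemma two_neq0 : (2 : R) != 0. Proof. by rewrite pnatr_eq0. Qed.

Lemma formQD_self_three0 f i j t : i != j -> t != i -> t != j ->
  f i = 0 -> f j = 0 -> f t = 0 -> formQD f f = 0 -> forall k, f k = 0.
Proof.
move=> ij ti tj fi fj ft; rewrite /formQD.
have [m [n [_ [cover sumE]]]] := ord4_complement ij.
have half_sqr_eq0 (a : R) : a * a / 2 = 0 -> a = 0.
  by move/eqP; rewrite !mulf_eq0 invr_eq0 (negbTE two_neq0) orbF orbb => /eqP.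
rewrite !sumE fi fj => ff0.
have [fm fn] : f m = 0 /\ f n = 0.
  case: (cover t) => et; move: ft; rewrite et => ft; rewrite et in ti tj.
  - by rewrite eqxx in ti.
  - by rewrite eqxx in tj.
  - by split=> //; apply: half_sqr_eq0; rewrite -ff0 ft; field.
  - by split=> //; apply: half_sqr_eq0; rewrite -ff0 ft; field.
by move=> k; case: (cover k) => ->.
Qed.

Definition QW : 'M[R]_4 := \matrix_(i < 4, j < 4)
  match nat_of_ord i, nat_of_ord j with
  | 0, 1 | 1, 0 => - 2^-1 | 2, 2 | 3, 3 => 1 | _, _ => 0 end.

Definition PW : 'M[R]_4 := \matrix_(i < 4, j < 4)
  match nat_of_ord i, nat_of_ord j with
  | 0, 1 | 1, 0 => - 2 | 2, 2 | 3, 3 => 1 | _, _ => 0 end.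

Definition GD : 'M[R]_4 := \matrix_(i < 4, j < 4) if i == j then 1 else -1.

Lemma mulQWPW : QW *m PW = 1%:M.
Proof.
apply/matrixP=> i j; rewrite !mxE sum4 !mxE.
by ord4_case i; ord4_case j; rewrite /=; field.
Qed.

Lemma mulPWQW : PW *m QW = 1%:M.
Proof.
apply/matrixP=> i j; rewrite !mxE sum4 !mxE.
by ord4_case i; ord4_case j; rewrite /=; field.
Qed.

Lemma mulQDGD : QD R *m GD = 2%:M.
Proof.
apply/matrixP=> i j; rewrite !mxE sum4 !mxE.
by ord4_case i; ord4_case j; rewrite /=; field.
Qed.

Lemma mulGDQD : GD *m QD R = 2%:M.
Proof.
apply/matrixP=> i j; rewrite !mxE sum4 !mxE.
by ord4_case i; ord4_case j; rewrite /=; field.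
Qed.

Lemma augmented_gramP W : W *m QW *m W^T = GD <-> W^T *m QD R *m W = 2 *: PW.
Proof.
split; first exact: (gram_transpose two_neq0 mulQWPW mulGDQD).
move=> WQW.
have : W^T^T *m QW *m W^T = 2 *: (2^-1 *: GD).
  apply: (gram_transpose (A := QD R) (G := 2 *: PW) two_neq0); last by rewrite trmxK.
  - by rewrite -scalemxAr mulQDGD scale_scalar_mx mulVf ?two_neq0.
  - by rewrite -scalemxAl mulPWQW scale_scalar_mx mulr1.
by rewrite trmxK scalerA mulfV ?two_neq0 // scale1r.
Qed.

Lemma gramW_mxE W i j : (W *m QW *m W^T) i j = formQW (W i) (W j).
Proof. by rewrite !mxE sum4 !mxE !sum4 !mxE /= /formQW; ring. Qed.

Lemma gramD_mxE n (A : 'M[R]_(4, n)) j k :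
  (A^T *m QD R *m A) j k = formQD (fun i => A i j) (fun i => A i k).
Proof. by rewrite !mxE sum4 !mxE !sum4 !mxE /= /formQD /sumf; field. Qed.

End Forms.

Section Coordinates.
Variable R : realType.
Implicit Types (C D : ocircle R) (x y r h c g d u v : R) (b : bool).

Lemma sqr_add_eq0 (a b : R) : a ^+ 2 + b ^+ 2 = 0 -> a = 0 /\ b = 0.
Proof.
move/eqP; rewrite paddr_eq0 ?sqr_ge0 // !sqrf_eq0.
by case/andP=> /eqP -> /eqP ->.
Qed.

Definition cocurv C : R :=
  match C with
  | OCirc x y _ _ => curv C * (x ^+ 2 + y ^+ 2) - (curv C)^-1
  | OLine _ _ c => 2 * c
  end.

Definition curvx C : R := match C with OCirc x _ _ _ => curv C * x | OLine h1 _ _ => h1 end.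
Definition curvy C : R := match C with OCirc _ y _ _ => curv C * y | OLine _ h2 _ => h2 end.

Definition wvec C (j : 'I_4) : R :=
  match nat_of_ord j with 0 => cocurv C | 1 => curv C | 2 => curvx C | _ => curvy C end.

Definition wform C D := formQW (wvec C) (wvec D).

Lemma wformE C D : wform C D =
  - (cocurv C * curv D + curv C * cocurv D) / 2 + curvx C * curvx D + curvy C * curvy D.
Proof. by []. Qed.

Lemma cocurv_circ x y r b : let k := curv (OCirc x y r b) in
  cocurv (OCirc x y r b) = k * (x ^+ 2 + y ^+ 2) - k^-1.
Proof. by []. Qed.

Lemma curvx_circ x y r b : curvx (OCirc x y r b) = curv (OCirc x y r b) * x.
Proof. by []. Qed.

Lemma curvy_circ x y r b : curvy (OCirc x y r b) = curv (OCirc x y r b) * y.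
Proof. by []. Qed.

Lemma wform_sym C D : wform C D = wform D C.
Proof. rewrite !wformE; ring. Qed.

Lemma curv_circ_neq0 x y r b : 0 < r -> curv (OCirc x y r b) != 0.
Proof. by move=> r_gt0 /=; case: b; rewrite ?oppr_eq0 invr_eq0 gt_eqF. Qed.

Lemma wform_cc x1 y1 r1 b1 x2 y2 r2 b2 : 0 < r1 -> 0 < r2 ->
  let k1 := curv (OCirc x1 y1 r1 b1) in let k2 := curv (OCirc x2 y2 r2 b2) in
  wform (OCirc x1 y1 r1 b1) (OCirc x2 y2 r2 b2) =
  (k2 / k1 + k1 / k2 - k1 * k2 * ((x1 - x2) ^+ 2 + (y1 - y2) ^+ 2)) / 2.
Proof.
move=> r1_gt0 r2_gt0 k1 k2.
have k1_neq0 : k1 != 0 by apply: curv_circ_neq0.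
have k2_neq0 : k2 != 0 by apply: curv_circ_neq0.
rewrite wformE !cocurv_circ !curvx_circ !curvy_circ -/k1 -/k2.
by field; rewrite k1_neq0 k2_neq0.
Qed.

Lemma wform_lc h1 h2 c x y r b : 0 < r ->
  wform (OLine h1 h2 c) (OCirc x y r b) = curv (OCirc x y r b) * (h1 * x + h2 * y - c).
Proof. by move=> r_gt0; rewrite wformE /= mul0r addr0; case: b; field; rewrite gt_eqF. Qed.

Lemma wform_ll h1 h2 c g1 g2 d : wform (OLine h1 h2 c) (OLine g1 g2 d) = h1 * g1 + h2 * g2.
Proof. by rewrite wformE /=; field. Qed.

Lemma wform_self C : valid_oc C -> wform C C = 1.
Proof.
case: C => [x y r b|h1 h2 c] /= C_valid; rewrite wformE.
- rewrite cocurv_circ curvx_circ curvy_circ.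
  by move: (curv_circ_neq0 x y b C_valid); move: (curv _) => k k_neq0; field.
- by rewrite /= mulr0 mul0r addr0 oppr0 mul0r add0r -!expr2.
Qed.

End Coordinates.

Section TangentForward.
Variable R : realType.
Implicit Types (C D : ocircle R) (x y r h c g d u v : R) (b : bool).

Definition disjoint_interiors C D := forall p, interior_oc C p -> interior_oc D p -> False.

Lemma disjoint_interiors_sym C D : disjoint_interiors C D -> disjoint_interiors D C.
Proof. by move=> CD p pD pC; apply: (CD p). Qed.

Lemma tangent_sym C D : tangent C D -> tangent D C.
Proof. by case=> p [[pC pD] p_uniq]; exists p; split=> // q [qD qC]; apply: p_uniq. Qed.

(* The reflection of a common point in the line of centres is again common, so a unique common
   point lies on that line. *)
Lemma tangent_cc_dist x1 y1 r1 b1 x2 y2 r2 b2 : 0 < r1 -> 0 < r2 ->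
  tangent (OCirc x1 y1 r1 b1) (OCirc x2 y2 r2 b2) ->
  (x1 - x2) ^+ 2 + (y1 - y2) ^+ 2 = (r1 + r2) ^+ 2 \/
  (x1 - x2) ^+ 2 + (y1 - y2) ^+ 2 = (r1 - r2) ^+ 2.
Proof.
move=> r1_gt0 r2_gt0 [[[u v]|] [[/= on1 on2] p_uniq]] //=.
have -> : (x1 - x2) ^+ 2 + (y1 - y2) ^+ 2 = (x2 - x1) ^+ 2 + (y2 - y1) ^+ 2 by ring.
have [/sqr_add_eq0 [/eqP x_eq /eqP y_eq]|D_neq0] := eqVneq ((x2 - x1) ^+ 2 + (y2 - y1) ^+ 2) 0.
  move: x_eq y_eq on2; rewrite !subr_eq0 => /eqP -> /eqP -> on2; right.
  have /eqP : r1 ^+ 2 = r2 ^+ 2 by rewrite -on1 -on2.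
  rewrite eqrXn2 ?ltW // => /eqP ->.
  by rewrite !subrr expr0n /= addr0.
set D := (x2 - x1) ^+ 2 + (y2 - y1) ^+ 2 in D_neq0 *.
pose t := ((u - x1) * (x2 - x1) + (v - y1) * (y2 - y1)) / D.
pose q := (x1 + 2 * t * (x2 - x1) - (u - x1), y1 + 2 * t * (y2 - y1) - (v - y1)).
have q_on1 : on_oc (OCirc x1 y1 r1 b1) (Some q) by rewrite /= -on1 /t /D; field.
have q_on2 : on_oc (OCirc x2 y2 r2 b2) (Some q) by rewrite /= -on2 /t /D; field.
case: (p_uniq (Some q) (conj q_on1 q_on2)) => qu qv.
have ux : u - x1 = t * (x2 - x1) by apply: (@mulfI _ 2); rewrite ?two_neq0 //; lra.
have vy : v - y1 = t * (y2 - y1) by apply: (@mulfI _ 2); rewrite ?two_neq0 //; lra.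
have r1E : r1 ^+ 2 = t ^+ 2 * D by rewrite -on1 ux vy /D; ring.
have r2E : r2 ^+ 2 = (t - 1) ^+ 2 * D.
  by rewrite -on2 -[u](subrK x1) -[v](subrK y1) ux vy /D; ring.
have : (D - (r1 + r2) ^+ 2) * (D - (r1 - r2) ^+ 2) = 0.
  have -> : (D - (r1 + r2) ^+ 2) * (D - (r1 - r2) ^+ 2) =
            (D - r1 ^+ 2 - r2 ^+ 2) ^+ 2 - 4 * r1 ^+ 2 * r2 ^+ 2 by ring.
  by rewrite r1E r2E; ring.
by move/eqP; rewrite mulf_eq0 !subr_eq0 => /orP[] /eqP; [left|right].
Qed.

Lemma exteriors_meet x1 y1 r1 x2 y2 r2 : 0 < r1 -> 0 < r2 ->
  ~ disjoint_interiors (OCirc x1 y1 r1 false) (OCirc x2 y2 r2 false).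
Proof.
move=> r1_gt0 r2_gt0 disj; pose s := r1 + r2 + (x1 - x2) ^+ 2 + 1.
have r1_lt : r1 < s by rewrite /s; have := sqr_ge0 (x1 - x2); lra.
have r2_lt : r2 < x1 - x2 + s by rewrite /s; have := sqr_ge0 (x1 - x2 + 2^-1); nra.
apply: (disj (x1 + s, y1)) => /=.
- rewrite (_ : x1 + s - x1 = s); last by ring.
  by rewrite subrr expr0n /= addr0; nra.
- rewrite (_ : x1 + s - x2 = x1 - x2 + s); last by ring.
  by have := sqr_ge0 (y1 - y2); nra.
Qed.

Lemma halfplane_exterior_meet h1 h2 c x y r : h1 ^+ 2 + h2 ^+ 2 = 1 -> 0 < r ->
  ~ disjoint_interiors (OLine h1 h2 c) (OCirc x y r false).
Proof.
move=> h_unit r_gt0 disj; pose a := h1 * x + h2 * y - c; pose s := r + a ^+ 2 + 1.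
have r_lt : r < s by rewrite /s; have := sqr_ge0 a; lra.
have as_gt0 : 0 < a + s by rewrite /s; have := sqr_ge0 (a + 2^-1); nra.
apply: (disj (x + s * h1, y + s * h2)) => /=.
- rewrite (_ : h1 * (x + s * h1) + h2 * (y + s * h2) = a + s * (h1 ^+ 2 + h2 ^+ 2) + c).
    by rewrite h_unit mulr1; lra.
  by rewrite /a; ring.
- rewrite (_ : (x + s * h1 - x) ^+ 2 + (y + s * h2 - y) ^+ 2 = s ^+ 2 * (h1 ^+ 2 + h2 ^+ 2)).
    by rewrite h_unit mulr1; nra.
  by ring.
Qed.

Lemma wform_tangent_cc x1 y1 r1 b1 x2 y2 r2 b2 : 0 < r1 -> 0 < r2 ->
  tangent (OCirc x1 y1 r1 b1) (OCirc x2 y2 r2 b2) ->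
  disjoint_interiors (OCirc x1 y1 r1 b1) (OCirc x2 y2 r2 b2) ->
  wform (OCirc x1 y1 r1 b1) (OCirc x2 y2 r2 b2) = -1.
Proof.
move=> r1_gt0 r2_gt0 /tangent_cc_dist - /(_ r1_gt0 r2_gt0) dist disj.
rewrite wform_cc //=.
have r1_neq0 : r1 != 0 by rewrite gt_eqF.
have r2_neq0 : r2 != 0 by rewrite gt_eqF.
case: b1 disj; case: b2 => disj /=; last by case: (exteriors_meet r1_gt0 r2_gt0 disj).
- case: dist => dist; rewrite dist; first by field; rewrite r1_neq0 r2_neq0.
  exfalso; have [le_r12|lt_r21] := lerP r1 r2.
  + by apply: (disj (x1, y1)) => /=; nra.
  + by apply: (disj (x2, y2)) => /=; nra.
- case: dist => dist; rewrite dist; last by field; rewrite r1_neq0 r2_neq0.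
  by exfalso; apply: (disj (x1, y1)) => /=; nra.
- case: dist => dist; rewrite dist; last by field; rewrite r1_neq0 r2_neq0.
  by exfalso; apply: (disj (x2, y2)) => /=; nra.
Qed.

(* Moving a common point along the line keeps it on the line and, by the same amount in the
   opposite direction, on the circle; uniqueness forces it onto the normal through the centre. *)
Lemma tangent_lc_dist h1 h2 c x y r b : h1 ^+ 2 + h2 ^+ 2 = 1 -> 0 < r ->
  tangent (OLine h1 h2 c) (OCirc x y r b) -> (h1 * x + h2 * y - c) ^+ 2 = r ^+ 2.
Proof.
move=> h_unit r_gt0 [[[u v]|] [[/= on_l on_c] p_uniq]] //.
pose t := - (u - x) * h2 + (v - y) * h1.
pose q := (u + 2 * t * h2, v - 2 * t * h1).
have q_on_l : on_oc (OLine h1 h2 c) (Some q) by rewrite /= -on_l /t; ring.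
have q_on_c : on_oc (OCirc x y r b) (Some q).
  rewrite /= -on_c (_ : (u + 2 * t * h2 - x) ^+ 2 + (v - 2 * t * h1 - y) ^+ 2 =
     (u - x) ^+ 2 + (v - y) ^+ 2 + 4 * t ^+ 2 * (h1 ^+ 2 + h2 ^+ 2 - 1)); last by rewrite /t; ring.
  by rewrite h_unit subrr mulr0 addr0.
case: (p_uniq (Some q) (conj q_on_l q_on_c)) => qu qv.
have t0 : t = 0.
  have th2 : t * h2 = 0 by lra.
  have th1 : t * h1 = 0 by lra.
  by rewrite -[t]mulr1 -h_unit mulrDr !expr2 !mulrA th1 th2 !mul0r addr0.
rewrite -on_c (_ : (u - x) ^+ 2 + (v - y) ^+ 2 = (h1 * (u - x) + h2 * (v - y)) ^+ 2 + t ^+ 2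
   - ((u - x) ^+ 2 + (v - y) ^+ 2) * (h1 ^+ 2 + h2 ^+ 2 - 1)); last by rewrite /t; ring.
rewrite h_unit subrr mulr0 subr0 t0 expr0n /= addr0 -on_l -sqrrN; congr (_ ^+ 2); ring.
Qed.

Lemma wform_tangent_lc h1 h2 c x y r b : h1 ^+ 2 + h2 ^+ 2 = 1 -> 0 < r ->
  tangent (OLine h1 h2 c) (OCirc x y r b) -> disjoint_interiors (OLine h1 h2 c) (OCirc x y r b) ->
  wform (OLine h1 h2 c) (OCirc x y r b) = -1.
Proof.
move=> h_unit r_gt0 /tangent_lc_dist - /(_ h_unit r_gt0) dist disj; rewrite wform_lc //.
case: b disj => disj; last by case: (halfplane_exterior_meet h_unit r_gt0 disj).
move/eqP: dist; rewrite eqf_sqr => /orP[] /eqP dist /=.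
- exfalso; apply: (disj (x, y)) => /=; first lra.
  by rewrite !subrr expr0n /= addr0 exprn_gt0.
- by rewrite dist mulrN mulVf ?gt_eqF.
Qed.

Lemma wform_tangent_ll h1 h2 c g1 g2 d : h1 ^+ 2 + h2 ^+ 2 = 1 -> g1 ^+ 2 + g2 ^+ 2 = 1 ->
  tangent (OLine h1 h2 c) (OLine g1 g2 d) -> disjoint_interiors (OLine h1 h2 c) (OLine g1 g2 d) ->
  wform (OLine h1 h2 c) (OLine g1 g2 d) = -1.
Proof.
move=> h_unit g_unit [p [_ p_uniq]] disj; rewrite wform_ll.
have p_inf := p_uniq None (conj I I).
have parallel : h1 * g2 - h2 * g1 = 0.
  apply/eqP; apply: contraT => det_neq0; exfalso.
  pose q := ((c * g2 - d * h2) / (h1 * g2 - h2 * g1), (h1 * d - g1 * c) / (h1 * g2 - h2 * g1)).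
  have q_on : on_oc (OLine h1 h2 c) (Some q) /\ on_oc (OLine g1 g2 d) (Some q).
    by split; rewrite /=; field.
  by move: (p_uniq _ q_on); rewrite p_inf.
have /eqP : (h1 * g1 + h2 * g2) ^+ 2 = 1 ^+ 2.
  rewrite (_ : _ ^+ 2 = (h1 ^+ 2 + h2 ^+ 2) * (g1 ^+ 2 + g2 ^+ 2) - (h1 * g2 - h2 * g1) ^+ 2).
    by rewrite h_unit g_unit parallel expr0n /= subr0 mulr1 expr1n.
  by ring.
rewrite eqf_sqr => /orP[/eqP hg1|/eqP //]; exfalso.
have [/eqP g1E /eqP g2E] : h1 - g1 = 0 /\ h2 - g2 = 0.
  apply: sqr_add_eq0; rewrite (_ : _ + _ = h1 ^+ 2 + h2 ^+ 2 + (g1 ^+ 2 + g2 ^+ 2)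
    - 2 * (h1 * g1 + h2 * g2)); last by ring.
  by rewrite h_unit g_unit hg1; ring.
move: g1E g2E disj; rewrite !subr_eq0 => /eqP <- /eqP <- disj.
pose s := c ^+ 2 + d ^+ 2 + 1.
have s_gt : c < s /\ d < s.
  by rewrite /s; have := sqr_ge0 (c - 2^-1); have := sqr_ge0 (d - 2^-1); nra.
have on_normal : h1 * (s * h1) + h2 * (s * h2) = s by rewrite -[RHS]mulr1 -h_unit; ring.
by apply: (disj (s * h1, s * h2)) => /=; rewrite on_normal; lra.
Qed.

Lemma wform_tangent C D : valid_oc C -> valid_oc D ->
  tangent C D -> disjoint_interiors C D -> wform C D = -1.
Proof.
case: C => [x1 y1 r1 b1|h1 h2 c]; case: D => [x2 y2 r2 b2|g1 g2 d] /= C_valid D_valid CD disj.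
- exact: wform_tangent_cc.
- rewrite wform_sym; apply: wform_tangent_lc => //.
  + exact: tangent_sym.
  + exact: disjoint_interiors_sym.
- exact: wform_tangent_lc.
- exact: wform_tangent_ll.
Qed.

Lemma curv_reverse C : curv (reverse_oc C) = - curv C.
Proof. by case: C => [x y r []|h1 h2 c] /=; rewrite ?opprK ?oppr0. Qed.

Lemma curvx_reverse C : curvx (reverse_oc C) = - curvx C.
Proof. by case: C => [x y r []|h1 h2 c] //=; rewrite mulNr ?opprK. Qed.

Lemma curvy_reverse C : curvy (reverse_oc C) = - curvy C.
Proof. by case: C => [x y r []|h1 h2 c] //=; rewrite mulNr ?opprK. Qed.

Lemma cocurv_reverse C : cocurv (reverse_oc C) = - cocurv C.
Proof.
case: C => [x y r b|h1 h2 c]; last by rewrite /= mulrN.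
by rewrite !cocurv_circ -[OCirc _ _ _ _]/(reverse_oc (OCirc x y r b)) curv_reverse
  mulNr invrN opprB opprK addrC.
Qed.

Lemma wvec_reverse C j : wvec (reverse_oc C) j = - wvec C j.
Proof.
rewrite /wvec; case: (nat_of_ord j) => [|[|[|_]]];
  by rewrite ?cocurv_reverse ?curv_reverse ?curvx_reverse ?curvy_reverse.
Qed.

Lemma wform_reverse C D : wform (reverse_oc C) (reverse_oc D) = wform C D.
Proof. by rewrite /wform /formQW !wvec_reverse; ring. Qed.

Lemma valid_reverse C : valid_oc C -> valid_oc (reverse_oc C).
Proof. by case: C => [x y r b|h1 h2 c] //=; rewrite !sqrrN. Qed.

Lemma on_reverse C p : on_oc (reverse_oc C) p <-> on_oc C p.
Proof.
case: C => [x y r b|h1 h2 c]; case: p => [[u v]|] //=.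
by split=> on; [apply: oppr_inj; rewrite -on | rewrite -on]; ring.
Qed.

Lemma tangent_reverse C D : tangent C D -> tangent (reverse_oc C) (reverse_oc D).
Proof.
case=> p [[pC pD] p_uniq]; exists p; split; first by split; apply/on_reverse.
by move=> q [/on_reverse qC /on_reverse qD]; apply: p_uniq.
Qed.

Lemma wform_descartes (D : 'I_4 -> ocircle R) : oriented_descartes D ->
  forall i j, i != j -> wform (D i) (D j) = -1.
Proof.
case=> [[D_valid D_tangent _] [disj|disj]] i j ij.
- by apply: wform_tangent; [| |apply: D_tangent|apply: disj].
- rewrite -wform_reverse; apply: wform_tangent; try exact: valid_reverse.
  + by apply: tangent_reverse; apply: D_tangent.
  + exact: disj.
Qed.

End TangentForward.

Section AugmentedMatrix.
Variable R : realType.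
Implicit Types (C : ocircle R) (D : 'I_4 -> ocircle R).

Definition WD D : 'M[R]_4 := \matrix_(i < 4, j < 4) wvec (D i) j.

Lemma MD_WD D i j : MD D i j = WD D i (lift ord0 j).
Proof. by rewrite !mxE; case: (D i) => [x y r b|h1 h2 c]; case: j => [[|[|[|?]]] ?]. Qed.

Lemma formQW_WD D i j : formQW (WD D i) (WD D j) = wform (D i) (D j).
Proof. by rewrite /wform /formQW !mxE. Qed.

Lemma gram_WD D : (forall i, valid_oc (D i)) ->
  (forall i j, i != j -> wform (D i) (D j) = -1) -> WD D *m QW R *m (WD D)^T = GD R.
Proof.
move=> D_valid D_wform; apply/matrixP => i j; rewrite gramW_mxE formQW_WD mxE.
by case: eqVneq => [->|ij]; [rewrite wform_self | rewrite D_wform].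
Qed.

Lemma descartes_MD D : oriented_descartes D ->
  col 0 (MD D) != 0 /\ (MD D)^T *m QD R *m MD D = W3 R.
Proof.
move=> od; have D_valid : forall i, valid_oc (D i) by case: od => [[]].
have /augmented_gramP aug := gram_WD D_valid (wform_descartes od).
have aug_mxE (j k : 'I_4) : formQD (fun i => WD D i j) (fun i => WD D i k) = (2 *: PW R) j k.
  by rewrite -gramD_mxE aug.
split.
- apply/eqP => /matrixP curv0.
  have curv_col0 i : WD D i o1 = 0.
    have := curv0 i 0; rewrite [col _ _ _ _]mxE MD_WD [RHS]mxE.
    by congr (WD D i _ = _); apply: val_inj.
  have := aug_mxE o0 o1; rewrite (formQD_ext (g' := fun=> 0) (frefl _) curv_col0) !mxE /=.
  by rewrite /formQD /sumf; lra.
- apply/matrixP => j k; rewrite gramD_mxE (formQD_ext (f' := fun i => WD D i (lift ord0 j))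
    (g' := fun i => WD D i (lift ord0 k))) ?aug_mxE => [|i|i]; rewrite ?MD_WD //.
  by rewrite !mxE; case: (ord3_cases j) => ->; case: (ord3_cases k) => -> /=; lra.
Qed.

End AugmentedMatrix.

Section Reconstruction.
Variable R : realType.
Implicit Types (u a x y : R).

Definition vec4 u a x y (j : 'I_4) : R :=
  match nat_of_ord j with 0 => u | 1 => a | 2 => x | _ => y end.

Definition ocircle_of_wvec u a x y : ocircle R :=
  if a == 0 then OLine x y (u / 2) else OCirc (x / a) (y / a) `|a|^-1 (0 < a).

Lemma valid_ocircle_of_wvec u a x y : x ^+ 2 + y ^+ 2 - u * a = 1 ->
  valid_oc (ocircle_of_wvec u a x y).
Proof.
rewrite /ocircle_of_wvec; case: eqP => [->|/eqP a_neq0] /= norm1.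
  by rewrite -norm1 mulr0 subr0.
by rewrite invr_gt0 normr_gt0.
Qed.

Lemma wvec_ocircle_of_wvec u a x y : x ^+ 2 + y ^+ 2 - u * a = 1 ->
  wvec (ocircle_of_wvec u a x y) =1 vec4 u a x y.
Proof.
move=> norm1 j; rewrite /ocircle_of_wvec /wvec /vec4; case: eqP => [a0|/eqP a_neq0].
  by case: j => [[|[|[|[|?]]]] ?] //=; field.
have curvE : curv (OCirc (x / a) (y / a) `|a|^-1 (0 < a)) = a.
  rewrite /= invrK; case: ltrP => a_sgn; first by rewrite gtr0_norm.
  by rewrite ler0_norm ?opprK.
case: j => [[|[|[|[|?]]]] ?] //; cbn -[curv cocurv curvx curvy];
  rewrite ?cocurv_circ ?curvx_circ ?curvy_circ curvE //; try by field.
have -> : u = (x ^+ 2 + y ^+ 2 - 1) / a by rewrite -norm1; field.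
by field.
Qed.

Variable M : 'M[R]_(4, 3).
Hypotheses (M_col0 : col 0 M != 0) (M_gram : M^T *m QD R *m M = W3 R).

Let a i := M i p0.
Let x i := M i p1.
Let y i := M i p2.

Let M_formQD j k : formQD (fun i => M i j) (fun i => M i k) = W3 R j k.
Proof. by rewrite -gramD_mxE M_gram. Qed.

Let aa : formQD a a = 0. Proof. by rewrite M_formQD mxE. Qed.
Let ax : formQD a x = 0. Proof. by rewrite M_formQD mxE. Qed.
Let ay : formQD a y = 0. Proof. by rewrite M_formQD mxE. Qed.
Let xx : formQD x x = 2. Proof. by rewrite M_formQD mxE. Qed.
Let yy : formQD y y = 2. Proof. by rewrite M_formQD mxE. Qed.
Let xy : formQD x y = 0. Proof. by rewrite M_formQD mxE. Qed.

Let sa_neq0 : sumf a != 0.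
Proof.
apply: contra M_col0 => /eqP sa0; apply/eqP/matrixP => i j.
rewrite (ord1 j) !mxE (_ : 0 = p0); last exact: val_inj.
exact: formQD_self_sum0 aa sa0 i.
Qed.

Let s := sumf a.
Let p := sumf x / 2.
Let q := sumf y / 2.
Let c := 4 * (2 + p ^+ 2 + q ^+ 2) / s ^+ 2.

(* The conditions Q_D(u, a) = -4, Q_D(u, x) = Q_D(u, y) = 0 fix u up to a multiple of the null
   vector a (using Q_D(1, g) = - sumf g), and Q_D(u, u) = 0 fixes the multiple. *)
Let u i := 4 / s * (1 + p * x i + q * y i) - c * a i.

Let ua : formQD u a = -4.
Proof.
have -> : formQD u a = 4 / s * (- s + p * formQD x a + q * formQD y a) - c * formQD a a.
  by rewrite /formQD /u /s /sumf; field; move: sa_neq0; rewrite /sumf.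
by rewrite formQD_sym ax formQD_sym ay aa; field.
Qed.

Let ux : formQD u x = 0.
Proof.
have -> : formQD u x = 4 / s * (- (2 * p) + p * formQD x x + q * formQD y x) - c * formQD a x.
  by rewrite /formQD /u /p /sumf; field; move: sa_neq0; rewrite /s /sumf.
by rewrite xx formQD_sym xy ax; field.
Qed.

Let uy : formQD u y = 0.
Proof.
have -> : formQD u y = 4 / s * (- (2 * q) + p * formQD x y + q * formQD y y) - c * formQD a y.
  by rewrite /formQD /u /q /sumf; field; move: sa_neq0; rewrite /s /sumf.
by rewrite yy xy ay; field.
Qed.

Let uu : formQD u u = 0.
Proof.
have -> : formQD u u = (4 / s) ^+ 2 * (- 4 - 4 * p ^+ 2 - 4 * q ^+ 2 + p ^+ 2 * formQD x x
    + q ^+ 2 * formQD y y + 2 * p * q * formQD x y)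
    - 2 * (4 / s) * c * (- s + p * formQD x a + q * formQD y a) + c ^+ 2 * formQD a a.
  by rewrite /formQD /u /p /q /s /sumf; field; move: sa_neq0; rewrite /s /sumf.
by rewrite xx yy xy formQD_sym ax formQD_sym ay aa /c; field.
Qed.

Definition W_of_mx : 'M[R]_4 := \matrix_(i < 4, j < 4) vec4 (u i) (a i) (x i) (y i) j.

Lemma W_of_mx_aug : W_of_mx^T *m QD R *m W_of_mx = 2 *: PW R.
Proof.
have colE j : (fun i => W_of_mx i j) =1 (fun i => vec4 (u i) (a i) (x i) (y i) j).
  by move=> i; rewrite mxE.
apply/matrixP => j k; rewrite gramD_mxE (formQD_ext (colE j) (colE k)) !mxE.
ord4_case j; ord4_case k => /=;
  rewrite ?[formQD a u]formQD_sym ?[formQD x u]formQD_sym ?[formQD y u]formQD_sym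
          ?[formQD x a]formQD_sym ?[formQD y a]formQD_sym ?[formQD y x]formQD_sym;
  rewrite ?ua ?ux ?uy ?uu ?aa ?ax ?ay ?xx ?yy ?xy; lra.
Qed.

Lemma W_of_mx_row_norm i : x i ^+ 2 + y i ^+ 2 - u i * a i = 1.
Proof.
have /augmented_gramP/matrixP/(_ i i) := W_of_mx_aug.
by rewrite gramW_mxE mxE eqxx /formQW !mxE /vec4 /= => <-; field.
Qed.

Definition config_of_mx i := ocircle_of_wvec (u i) (a i) (x i) (y i).

Lemma config_of_mx_valid i : valid_oc (config_of_mx i).
Proof. exact/valid_ocircle_of_wvec/W_of_mx_row_norm. Qed.

Lemma WD_config_of_mx : WD config_of_mx = W_of_mx.
Proof. by apply/matrixP => i j; rewrite !mxE wvec_ocircle_of_wvec ?W_of_mx_row_norm. Qed.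

Lemma MD_config_of_mx : MD config_of_mx = M.
Proof.
apply/matrixP => i j; rewrite MD_WD WD_config_of_mx mxE.
by case: (ord3_cases j) => ->.
Qed.

End Reconstruction.

Section TangentBackward.
Variable R : realType.
Implicit Types (C D F : ocircle R) (x y r h c g d u v : R) (b : bool).

Lemma wform_antipodal C D F : wvec D =1 (fun j => - wvec C j) -> wform D F = - wform C F.
Proof. by move=> DC; rewrite /wform /formQW !DC; field. Qed.

Lemma sqr_inv_curv x y r b : 0 < r -> (curv (OCirc x y r b))^-1 ^+ 2 = r ^+ 2.
Proof. by move=> r_gt0; case: b => /=; rewrite ?invrN invrK ?sqrrN. Qed.

Lemma wform_cc_dist x1 y1 r1 b1 x2 y2 r2 b2 : 0 < r1 -> 0 < r2 ->
  wform (OCirc x1 y1 r1 b1) (OCirc x2 y2 r2 b2) = -1 ->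
  (x1 - x2) ^+ 2 + (y1 - y2) ^+ 2 =
  ((curv (OCirc x1 y1 r1 b1))^-1 + (curv (OCirc x2 y2 r2 b2))^-1) ^+ 2.
Proof.
move=> r1_gt0 r2_gt0; rewrite wform_cc //.
move: (curv_circ_neq0 x1 y1 b1 r1_gt0) (curv_circ_neq0 x2 y2 b2 r2_gt0).
move: (curv _) (curv _) => k1 k2 k1_neq0 k2_neq0 wf.
apply: (@mulfI _ (k1 * k2)); first by rewrite mulf_neq0.
have -> : k1 * k2 * ((x1 - x2) ^+ 2 + (y1 - y2) ^+ 2) = k2 / k1 + k1 / k2 + 2 by lra.
by field; rewrite k1_neq0 k2_neq0.
Qed.

(* The equality case of the triangle inequality, in squared form. *)
Lemma triangle_eq_sqr (vx vy ex ey q1 q2 : R) : vx ^+ 2 + vy ^+ 2 = q1 ^+ 2 ->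
  (vx - ex) ^+ 2 + (vy - ey) ^+ 2 = q2 ^+ 2 -> ex ^+ 2 + ey ^+ 2 = (q1 + q2) ^+ 2 ->
  (q1 + q2) * vx = q1 * ex /\ (q1 + q2) * vy = q1 * ey.
Proof.
move=> v_norm ve_norm e_norm.
have [] : (q1 + q2) * vx - q1 * ex = 0 /\ (q1 + q2) * vy - q1 * ey = 0.
  apply: sqr_add_eq0.
  rewrite (_ : _ + _ = (q1 + q2) ^+ 2 * (vx ^+ 2 + vy ^+ 2) - q1 * (q1 + q2) *
    ((vx ^+ 2 + vy ^+ 2) + (ex ^+ 2 + ey ^+ 2) - ((vx - ex) ^+ 2 + (vy - ey) ^+ 2))
    + q1 ^+ 2 * (ex ^+ 2 + ey ^+ 2)); last by ring.
  by rewrite v_norm ve_norm e_norm; ring.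
by move=> /eqP; rewrite subr_eq0 => /eqP -> /eqP; rewrite subr_eq0 => /eqP ->.
Qed.

Lemma tangent_cc_of_dist x1 y1 r1 b1 x2 y2 r2 b2 q1 q2 :
  q1 ^+ 2 = r1 ^+ 2 -> q2 ^+ 2 = r2 ^+ 2 -> q1 + q2 != 0 ->
  (x1 - x2) ^+ 2 + (y1 - y2) ^+ 2 = (q1 + q2) ^+ 2 ->
  tangent (OCirc x1 y1 r1 b1) (OCirc x2 y2 r2 b2).
Proof.
move=> q1r1 q2r2 q_neq0 dist; pose t := q1 / (q1 + q2).
exists (Some (x1 + t * (x2 - x1), y1 + t * (y2 - y1))); split.
  split=> /=; [rewrite -q1r1 | rewrite -q2r2].
  - rewrite (_ : _ + _ = t ^+ 2 * ((x1 - x2) ^+ 2 + (y1 - y2) ^+ 2)); last by ring.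
    by rewrite dist /t; field.
  - rewrite (_ : _ + _ = (t - 1) ^+ 2 * ((x1 - x2) ^+ 2 + (y1 - y2) ^+ 2)); last by ring.
    by rewrite dist /t; field.
case=> [[u v]|] [] //= on1 on2.
have [] := @triangle_eq_sqr (u - x1) (v - y1) (x2 - x1) (y2 - y1) q1 q2.
- by rewrite q1r1.
- by rewrite q2r2 -on2; congr (_ ^+ 2 + _ ^+ 2); ring.
- by rewrite -dist; ring.
move=> ux vy; congr (Some (_, _)).
- have -> : u = x1 + q1 * (x2 - x1) / (q1 + q2) by rewrite -ux; field.
  by rewrite /t; field.
- have -> : v = y1 + q1 * (y2 - y1) / (q1 + q2) by rewrite -vy; field.
  by rewrite /t; field.
Qed.

Lemma tangent_of_wform_cc x1 y1 r1 b1 x2 y2 r2 b2 : 0 < r1 -> 0 < r2 ->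
  wform (OCirc x1 y1 r1 b1) (OCirc x2 y2 r2 b2) = -1 ->
  ~ wvec (OCirc x2 y2 r2 b2) =1 (fun j => - wvec (OCirc x1 y1 r1 b1) j) ->
  tangent (OCirc x1 y1 r1 b1) (OCirc x2 y2 r2 b2).
Proof.
move=> r1_gt0 r2_gt0 wf not_antipodal.
have dist := wform_cc_dist r1_gt0 r2_gt0 wf.
apply: (tangent_cc_of_dist b1 b2 _ _ _ dist); try exact: sqr_inv_curv.
apply/eqP => rho0; apply: not_antipodal.
have k2E : curv (OCirc x2 y2 r2 b2) = - curv (OCirc x1 y1 r1 b1).
  by apply: invr_inj; rewrite invrN; apply/eqP; rewrite -addr_eq0 addrC rho0.
move: dist; rewrite rho0 expr0n /= => /sqr_add_eq0 [/eqP x_eq /eqP y_eq].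
move: x_eq y_eq k2E; rewrite !subr_eq0 => /eqP <- /eqP <- k2E.
move: (curv_circ_neq0 x1 y1 b1 r1_gt0) => k1_neq0.
move=> [[|[|[|j]]] lt_j4]; rewrite /wvec; cbn -[curv cocurv curvx curvy];
  rewrite ?cocurv_circ ?curvx_circ ?curvy_circ k2E ?invrN //; by field.
Qed.

Lemma tangent_of_wform_lc h1 h2 c x y r b : h1 ^+ 2 + h2 ^+ 2 = 1 -> 0 < r ->
  wform (OLine h1 h2 c) (OCirc x y r b) = -1 -> tangent (OLine h1 h2 c) (OCirc x y r b).
Proof.
move=> h_unit r_gt0; rewrite wform_lc //.
move: (curv_circ_neq0 x y b r_gt0) (sqr_inv_curv x y b r_gt0).
move: (curv _) => k k_neq0; move: (k^-1) (mulfV k_neq0) => q kq1 qr wf.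
have dist : h1 * x + h2 * y - c = - q by apply: (mulfI k_neq0); rewrite wf mulrN kq1.
exists (Some (x + q * h1, y + q * h2)); split.
  split=> /=.
  - rewrite (_ : _ + _ = h1 * x + h2 * y + q * (h1 ^+ 2 + h2 ^+ 2)); last by ring.
    by rewrite h_unit mulr1; lra.
  - rewrite (_ : _ + _ = q ^+ 2 * (h1 ^+ 2 + h2 ^+ 2)); last by ring.
    by rewrite h_unit mulr1.
case=> [[u v]|] [] //= on_l on_c.
have [] : u - x - q * h1 = 0 /\ v - y - q * h2 = 0.
  apply: sqr_add_eq0; rewrite (_ : _ + _ = ((u - x) ^+ 2 + (v - y) ^+ 2)
    - 2 * q * ((h1 * u + h2 * v) - (h1 * x + h2 * y)) + q ^+ 2 * (h1 ^+ 2 + h2 ^+ 2)); last by ring.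
  by rewrite on_c on_l h_unit -qr (_ : c - (h1 * x + h2 * y) = q); [ring | lra].
by move=> ux vy; congr (Some (_, _)); lra.
Qed.

Lemma antiparallel_of_wform h1 h2 c g1 g2 d : h1 ^+ 2 + h2 ^+ 2 = 1 -> g1 ^+ 2 + g2 ^+ 2 = 1 ->
  wform (OLine h1 h2 c) (OLine g1 g2 d) = -1 -> g1 = - h1 /\ g2 = - h2.
Proof.
rewrite wform_ll => h_unit g_unit wf.
have [] : h1 + g1 = 0 /\ h2 + g2 = 0.
  apply: sqr_add_eq0; rewrite (_ : _ + _ = (h1 ^+ 2 + h2 ^+ 2) + (g1 ^+ 2 + g2 ^+ 2)
    + 2 * (h1 * g1 + h2 * g2)); last by ring.
  by rewrite h_unit g_unit wf; ring.
by split; lra.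
Qed.

Lemma tangent_of_wform_ll h1 h2 c g1 g2 d : h1 ^+ 2 + h2 ^+ 2 = 1 -> g1 ^+ 2 + g2 ^+ 2 = 1 ->
  wform (OLine h1 h2 c) (OLine g1 g2 d) = -1 ->
  ~ wvec (OLine g1 g2 d) =1 (fun j => - wvec (OLine h1 h2 c) j) ->
  tangent (OLine h1 h2 c) (OLine g1 g2 d).
Proof.
move=> h_unit g_unit /(antiparallel_of_wform h_unit g_unit) [g1E g2E] not_antipodal.
exists None; split=> // [[[u v]|]] // [] /= on_h on_g; exfalso; apply: not_antipodal.
have dE : d = - c by rewrite -on_g -on_h g1E g2E; ring.
by move=> [[|[|[|j]]] lt_j4]; rewrite /wvec /= ?dE ?g1E ?g2E //; ring.
Qed.

(* The third circle rules out the antipodal pair C, -C, for which wform C F = - wform D F. *)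
Lemma tangent_of_wform C D F : valid_oc C -> valid_oc D ->
  wform C D = -1 -> wform C F = -1 -> wform D F = -1 -> tangent C D.
Proof.
move=> C_valid D_valid CD CF DF.
have not_antipodal : ~ wvec D =1 (fun j => - wvec C j).
  by move=> /(@wform_antipodal C D F); rewrite CF DF; lra.
clear CF DF.
case: C C_valid CD not_antipodal => [x1 y1 r1 b1|h1 h2 c];
  case: D D_valid => [x2 y2 r2 b2|g1 g2 d] /= D_valid C_valid CD not_antipodal.
- exact: tangent_of_wform_cc.
- by apply: tangent_sym; apply: tangent_of_wform_lc; rewrite // wform_sym.
- exact: tangent_of_wform_lc.
- exact: tangent_of_wform_ll.
Qed.

End TangentBackward.

Section DisjointBackward.
Variable R : realType.
Implicit Types (C D F : ocircle R) (x y r h c g d u v : R) (b : bool).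

Lemma sqr_norm_add_lt (vx vy wx wy a b : R) : 0 < a -> 0 <= b ->
  vx ^+ 2 + vy ^+ 2 < a ^+ 2 -> wx ^+ 2 + wy ^+ 2 <= b ^+ 2 ->
  (vx + wx) ^+ 2 + (vy + wy) ^+ 2 < (a + b) ^+ 2.
Proof.
move=> a_gt0 b_ge0 v_lt w_le.
have lagrange : (vx * wx + vy * wy) ^+ 2 + (vx * wy - vy * wx) ^+ 2 =
  (vx ^+ 2 + vy ^+ 2) * (wx ^+ 2 + wy ^+ 2) by ring.
rewrite (_ : _ + _ = (vx ^+ 2 + vy ^+ 2) + (wx ^+ 2 + wy ^+ 2) + 2 * (vx * wx + vy * wy));
  last by ring.
have V_ge0 : 0 <= vx ^+ 2 + vy ^+ 2 by rewrite addr_ge0 ?sqr_ge0.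
have W_ge0 : 0 <= wx ^+ 2 + wy ^+ 2 by rewrite addr_ge0 ?sqr_ge0.
have := sqr_ge0 (vx * wy - vy * wx).
move: lagrange V_ge0 W_ge0 v_lt w_le.
move: (vx * wx + vy * wy) (vx * wy - vy * wx) (vx ^+ 2 + vy ^+ 2) (wx ^+ 2 + wy ^+ 2) => t e V W.
move=> lagrange V_ge0 W_ge0 v_lt w_le e2_ge0.
have [t_le0|t_gt0] := lerP t 0; first by nra.
have t2_lt : t ^+ 2 < (a * b) ^+ 2.
  rewrite exprMn; have [b0|b_gt0] := eqVneq b 0.
    by move: w_le; rewrite b0 expr0n /= mulr0 => w_le; nra.
  have b2_gt0 : 0 < b ^+ 2 by rewrite exprn_gt0 // lt_def b_gt0.
  have : V * b ^+ 2 < a ^+ 2 * b ^+ 2 by rewrite ltr_pM2r.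
  have : V * W <= V * b ^+ 2 by apply: ler_wpM2l.
  lra.
have : t < a * b by move: t2_lt; have := mulr_ge0 (ltW a_gt0) b_ge0; move: (a * b) => m; nra.
nra.
Qed.

Lemma dot_lt_of_sqr_norm_lt (h1 h2 vx vy r : R) : h1 ^+ 2 + h2 ^+ 2 = 1 -> 0 < r ->
  vx ^+ 2 + vy ^+ 2 < r ^+ 2 -> h1 * vx + h2 * vy < r.
Proof.
move=> h_unit r_gt0 v_lt.
have lagrange : (h1 * vx + h2 * vy) ^+ 2 + (h1 * vy - h2 * vx) ^+ 2 = vx ^+ 2 + vy ^+ 2.
  by rewrite -[RHS]mul1r -h_unit; ring.
have := sqr_ge0 (h1 * vy - h2 * vx).
move: lagrange; move: (h1 * vx + h2 * vy) (h1 * vy - h2 * vx) => t e; nra.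
Qed.

Lemma disjoint_in_in x1 y1 r1 x2 y2 r2 : 0 < r1 -> 0 < r2 ->
  (x1 - x2) ^+ 2 + (y1 - y2) ^+ 2 = (r1 + r2) ^+ 2 ->
  disjoint_interiors (OCirc x1 y1 r1 true) (OCirc x2 y2 r2 true).
Proof.
move=> r1_gt0 r2_gt0 dist [u v] /= in1 in2.
have := @sqr_norm_add_lt (x1 - u) (y1 - v) (u - x2) (v - y2) r1 r2 r1_gt0 (ltW r2_gt0).
rewrite (_ : (x1 - u) ^+ 2 + (y1 - v) ^+ 2 = (u - x1) ^+ 2 + (v - y1) ^+ 2); last by ring.
move=> /(_ in1 (ltW in2)).
rewrite (_ : x1 - u + (u - x2) = x1 - x2) 1?(_ : y1 - v + (v - y2) = y1 - y2);
  by rewrite ?dist ?ltxx //; ring.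
Qed.

Lemma disjoint_in_out x1 y1 r1 x2 y2 r2 : 0 < r1 -> r1 < r2 ->
  (x1 - x2) ^+ 2 + (y1 - y2) ^+ 2 = (r1 - r2) ^+ 2 ->
  disjoint_interiors (OCirc x1 y1 r1 true) (OCirc x2 y2 r2 false).
Proof.
move=> r1_gt0 lt_r12 dist [u v] /= in1 out2.
have := @sqr_norm_add_lt (u - x1) (v - y1) (x1 - x2) (y1 - y2) r1 (r2 - r1) r1_gt0.
rewrite subr_ge0 (ltW lt_r12) dist (_ : (r1 - r2) ^+ 2 = (r2 - r1) ^+ 2); last by ring.
move=> /(_ isT in1 (lexx _)).
rewrite (_ : u - x1 + (x1 - x2) = u - x2) 1?(_ : v - y1 + (y1 - y2) = v - y2)
  1?(_ : r1 + (r2 - r1) = r2); by [lra | ring].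
Qed.

Lemma disjoint_line_in h1 h2 c x y r : h1 ^+ 2 + h2 ^+ 2 = 1 -> 0 < r ->
  h1 * x + h2 * y - c = - r -> disjoint_interiors (OLine h1 h2 c) (OCirc x y r true).
Proof.
move=> h_unit r_gt0 dist [u v] /= in_l in_c.
have := dot_lt_of_sqr_norm_lt h_unit r_gt0 in_c; lra.
Qed.

Lemma disjoint_of_wform_cc x1 y1 r1 b1 x2 y2 r2 b2 : 0 < r1 -> 0 < r2 ->
  wform (OCirc x1 y1 r1 b1) (OCirc x2 y2 r2 b2) = -1 ->
  0 < curv (OCirc x1 y1 r1 b1) + curv (OCirc x2 y2 r2 b2) ->
  disjoint_interiors (OCirc x1 y1 r1 b1) (OCirc x2 y2 r2 b2).
Proof.
move=> r1_gt0 r2_gt0 /(wform_cc_dist r1_gt0 r2_gt0).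
have ir1_gt0 : 0 < r1^-1 by rewrite invr_gt0.
have ir2_gt0 : 0 < r2^-1 by rewrite invr_gt0.
case: b1; case: b2 => /= dist k_sum; rewrite ?invrN ?invrK in dist.
- exact: disjoint_in_in.
- apply: disjoint_in_out => //.
  by rewrite -ltf_pV2 ?posrE //; lra.
- apply: disjoint_interiors_sym; apply: disjoint_in_out => //.
    by rewrite -ltf_pV2 ?posrE //; lra.
  have -> : (x2 - x1) ^+ 2 + (y2 - y1) ^+ 2 = (x1 - x2) ^+ 2 + (y1 - y2) ^+ 2 by ring.
  by rewrite dist; ring.
- lra.
Qed.

Lemma disjoint_of_wform C D : valid_oc C -> valid_oc D -> wform C D = -1 ->
  0 < curv C + curv D -> disjoint_interiors C D.
Proof.
case: C => [x1 y1 r1 b1|h1 h2 c]; case: D => [x2 y2 r2 b2|g1 g2 d] /= C_valid D_valid wf k_sum.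
- exact: disjoint_of_wform_cc.
- apply: disjoint_interiors_sym.
  move: wf k_sum; rewrite wform_sym wform_lc // addr0; case: b1 => /= wf k_sum; last first.
    have : 0 < r1^-1 by rewrite invr_gt0.
    lra.
  apply: disjoint_line_in => //; apply: (mulfI (curv_circ_neq0 x1 y1 true C_valid)).
  by rewrite /= wf mulrN mulVf ?gt_eqF.
- move: wf k_sum; rewrite wform_lc // add0r; case: b2 => /= wf k_sum; last first.
    have : 0 < r2^-1 by rewrite invr_gt0.
    lra.
  apply: disjoint_line_in => //; apply: (mulfI (curv_circ_neq0 x2 y2 true D_valid)).
  by rewrite /= wf mulrN mulVf ?gt_eqF.
- by move: k_sum; rewrite addr0 ltxx.
Qed.

End DisjointBackward.

Section ConfigurationBackward.
Variable R : realType.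
Implicit Types (C D F : ocircle R) (x y r h c g d u v : R) (b : bool).

Lemma line_of_curv0 C : valid_oc C -> curv C = 0 -> exists h1 h2 c, C = OLine h1 h2 c.
Proof.
case: C => [x y r b|h1 h2 c] /= C_valid k0; last by exists h1, h2, c.
by move: (curv_circ_neq0 x y b C_valid); rewrite /= k0 eqxx.
Qed.

Lemma disjoint_of_wform_ll h1 h2 c g1 g2 d : h1 ^+ 2 + h2 ^+ 2 = 1 -> g1 ^+ 2 + g2 ^+ 2 = 1 ->
  wform (OLine h1 h2 c) (OLine g1 g2 d) = -1 -> 0 < c + d ->
  disjoint_interiors (OLine h1 h2 c) (OLine g1 g2 d).
Proof.
move=> h_unit g_unit /(antiparallel_of_wform h_unit g_unit) [-> ->] cd_gt0 [u v] /=; lra.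
Qed.

Lemma offsets_sum_pos h1 h2 c g1 g2 d F : h1 ^+ 2 + h2 ^+ 2 = 1 -> g1 ^+ 2 + g2 ^+ 2 = 1 ->
  valid_oc F -> 0 < curv F -> wform (OLine h1 h2 c) (OLine g1 g2 d) = -1 ->
  wform (OLine h1 h2 c) F = -1 -> wform (OLine g1 g2 d) F = -1 -> 0 < c + d.
Proof.
move=> h_unit g_unit; case: F => [x y r b|? ? ?] F_valid; last by rewrite /= ltxx.
move=> /[swap] /(antiparallel_of_wform h_unit g_unit) [-> ->].
rewrite !wform_lc //; move: (curv _) => k k_gt0 hF gF.
have : 0 < k * (c + d).
  rewrite (_ : k * (c + d) = - (k * (h1 * x + h2 * y - c) + k * (- h1 * x + - h2 * y - d)));
    by [rewrite hF gF; lra | ring].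
by rewrite pmulr_rgt0.
Qed.

Lemma pair_sum_of_formQD (f : 'I_4 -> R) i j : i != j -> formQD f f = 0 -> 0 < sumf f ->
  0 < f i + f j \/ [/\ f i = 0, f j = 0 & exists2 m, m != i /\ m != j & 0 < f m].
Proof.
move=> ij ff0 sf_gt0.
have [m [n [[mi mj _ _ _] [_ sumE]]]] := ord4_complement R ij.
have pairs : 2 * (f i + f j) * (f m + f n) = (f i - f j) ^+ 2 + (f m - f n) ^+ 2.
  apply: (@mulfI _ 2^-1); first by rewrite invr_eq0 two_neq0.
  by rewrite -[RHS]subr0 -ff0 /formQD !sumE; field.
move: sf_gt0; rewrite sumE => sf_gt0.
have := sqr_ge0 (f i - f j); have := sqr_ge0 (f m - f n).
case: (ltgtP 0 (f i + f j)) => [|ij_lt0|ij_eq0] sq_mn sq_ij; first by left.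
  by exfalso; nra.
have [/eqP fi_fj /eqP fm_fn] : f i - f j = 0 /\ f m - f n = 0.
  by apply: sqr_add_eq0; rewrite -pairs -ij_eq0 mulr0 mul0r.
by right; split; [lra|lra|exists m; [split|lra]].
Qed.

Lemma interiors_disjoint_of_wform (E : 'I_4 -> ocircle R) :
  (forall i, valid_oc (E i)) -> (forall i j, i != j -> wform (E i) (E j) = -1) ->
  formQD (fun i => curv (E i)) (fun i => curv (E i)) = 0 -> 0 < sumf (fun i => curv (E i)) ->
  interiors_disjoint E.
Proof.
move=> E_valid E_wform kk0 sk_gt0 i j ij.
case: (pair_sum_of_formQD ij kk0 sk_gt0) => [k_sum|[ki0 kj0 [m [mi mj] km_gt0]]].
  by apply: disjoint_of_wform => //; apply: E_wform.
have [h1 [h2 [c Ei]]] := line_of_curv0 (E_valid i) ki0.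
have [g1 [g2 [d Ej]]] := line_of_curv0 (E_valid j) kj0.
have := E_valid i; have := E_valid j; rewrite Ei Ej /= => g_unit h_unit.
apply: disjoint_of_wform_ll => //; first by rewrite -Ei -Ej; apply: E_wform.
apply: (offsets_sum_pos h_unit g_unit (E_valid m) km_gt0); rewrite -?Ei -?Ej;
  by apply: E_wform; rewrite // eq_sym.
Qed.

End ConfigurationBackward.

Section DescartesOfAugmented.
Variable R : realType.
Implicit Types (C : ocircle R) (E : 'I_4 -> ocircle R).

(* [pt_wvec p] is the augmented vector of the point p viewed as a circle of radius 0 (or of the
   point at infinity); it is Q_W-null and Q_W-orthogonal to exactly the circles through p. *)
Definition pt_wvec (p : epoint R) : 'I_4 -> R :=
  match p with Some (u, v) => vec4 (u ^+ 2 + v ^+ 2) 1 u v | None => vec4 1 0 0 0 end.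

Lemma formQW_pt_on C p : valid_oc C -> on_oc C p -> formQW (wvec C) (pt_wvec p) = 0.
Proof.
case: C => [x y r b|h1 h2 c]; case: p => [[u v]|] //= C_valid on_C;
  rewrite /formQW /wvec /pt_wvec /vec4.
- cbn -[curv cocurv curvx curvy].
  move: (curv_circ_neq0 x y b C_valid) (sqr_inv_curv x y b C_valid).
  rewrite cocurv_circ curvx_circ curvy_circ; move: (curv _) => k k_neq0 rk.
  rewrite (_ : _ + _ = - (k * ((u - x) ^+ 2 + (v - y) ^+ 2) - k^-1) / 2); last by field.
  by rewrite on_C -rk; field.
- by rewrite /= -on_C; field.
- by rewrite /=; field.
Qed.

Lemma pt_wvec_nonzero p : pt_wvec p o0 != 0 \/ pt_wvec p o1 != 0.
Proof. by case: p => [[u v]|]; [right|left]; rewrite /pt_wvec /vec4 /= oner_eq0. Qed.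

Lemma formQW_pt_self p : formQW (pt_wvec p) (pt_wvec p) = 0.
Proof. by case: p => [[u v]|]; rewrite /formQW /pt_wvec /vec4 /=; field. Qed.

Lemma trmx_QW : (QW R)^T = QW R.
Proof. by apply/matrixP => i j; rewrite !mxE; ord4_case i; ord4_case j. Qed.

Lemma mulmx_QW_mxE (W : 'M[R]_4) (z : 'cV[R]_4) n :
  (W *m QW R *m z) n 0 = formQW (W n) (fun k => z k 0).
Proof. by rewrite !mxE sum4 !mxE !sum4 !mxE /= /formQW; field. Qed.

Lemma quad_QW_mxE (z : 'cV[R]_4) :
  (z^T *m QW R *m z) 0 0 = formQW (fun k => z k 0) (fun k => z k 0).
Proof. by rewrite !mxE sum4 !mxE !sum4 !mxE /= /formQW; field. Qed.

Lemma augmented_transport (W : 'M[R]_4) (z : 'cV[R]_4) : W^T *m QD R *m W = 2 *: PW R ->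
  (W *m QW R *m z)^T *m QD R *m (W *m QW R *m z) = 2 *: (z^T *m QW R *m z) /\
  W^T *m QD R *m (W *m QW R *m z) = 2 *: z.
Proof.
move=> aug; split; last by rewrite !mulmxA aug -!scalemxAl mulPWQW mul1mx.
have -> : (W *m QW R *m z)^T *m QD R *m (W *m QW R *m z) =
    z^T *m QW R *m ((W^T *m QD R *m W) *m (QW R *m z)) by rewrite !trmx_mul trmx_QW !mulmxA.
by rewrite aug -scalemxAl mulmxA mulPWQW mul1mx -scalemxAr.
Qed.

(* If p lay on three circles, alpha := W Q_W z(p) would be a Q_D-null vector with three zero
   coordinates, hence zero; but W^T Q_D alpha = 2 z(p) is not. *)
Lemma no_triple_point E : (forall i, valid_oc (E i)) -> (WD E)^T *m QD R *m WD E = 2 *: PW R ->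
  forall i j t p, i != j -> t != i -> t != j ->
  on_oc (E i) p -> on_oc (E j) p -> on_oc (E t) p -> False.
Proof.
move=> E_valid aug i j t p ij ti tj on_i on_j on_t.
pose z : 'cV[R]_4 := \col_k pt_wvec p k.
have [alpha_null alpha_inv] := augmented_transport z aug.
set alpha := WD E *m QW R *m z in alpha_null alpha_inv.
have alphaE n : alpha n 0 = formQW (wvec (E n)) (pt_wvec p).
  by rewrite /alpha mulmx_QW_mxE /formQW !mxE.
have alpha_formQD : formQD (fun n => alpha n 0) (fun n => alpha n 0) = 0.
  have := congr1 (fun A : 'M_1 => A 0 0) alpha_null; rewrite /= gramD_mxE => ->.
  by rewrite mxE quad_QW_mxE /formQW !mxE -/(formQW (pt_wvec p) (pt_wvec p)) formQW_pt_self mulr0.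
have alpha0 : alpha = 0.
  have zero_at k : on_oc (E k) p -> alpha k 0 = 0 by move=> on_k; rewrite alphaE formQW_pt_on.
  have := formQD_self_three0 ij ti tj (zero_at _ on_i) (zero_at _ on_j) (zero_at _ on_t)
    alpha_formQD.
  by move=> alpha_n; apply/matrixP => n k; rewrite (ord1 k) [RHS]mxE alpha_n.
move: alpha_inv; rewrite alpha0 mulmx0 => /esym/eqP.
rewrite scaler_eq0 (negbTE (two_neq0 R)) /= => /eqP/matrixP z0.
by case: (pt_wvec_nonzero p) => /eqP []; [move: (z0 o0 0) | move: (z0 o1 0)]; rewrite !mxE.
Qed.

Lemma formQD_curv_aug E : (WD E)^T *m QD R *m WD E = 2 *: PW R ->
  formQD (fun i => curv (E i)) (fun i => curv (E i)) = 0.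
Proof.
move=> aug; have curvE i : WD E i o1 = curv (E i) by rewrite mxE.
by rewrite -(formQD_ext curvE curvE) -gramD_mxE aug !mxE /= mulr0.
Qed.

Lemma sum_curv_aug_neq0 E : (WD E)^T *m QD R *m WD E = 2 *: PW R ->
  sumf (fun i => curv (E i)) != 0.
Proof.
move=> aug; apply/eqP => sk0.
have k0 i : curv (E i) = 0 := formQD_self_sum0 (formQD_curv_aug aug) sk0 i.
have curvE i : WD E i o1 = curv (E i) by rewrite mxE.
have cocurvE i : WD E i o0 = cocurv (E i) by rewrite mxE.
have := gramD_mxE (WD E) o0 o1; rewrite aug (formQD_ext cocurvE curvE) !mxE /=.
by rewrite /formQD /sumf !k0; lra.
Qed.

Lemma oriented_descartes_of_aug E : (forall i, valid_oc (E i)) ->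
  (WD E)^T *m QD R *m WD E = 2 *: PW R -> oriented_descartes E.
Proof.
move=> E_valid aug.
have E_wform i j : i != j -> wform (E i) (E j) = -1.
  move=> ij; move/augmented_gramP/matrixP/(_ i j): aug.
  by rewrite gramW_mxE formQW_WD mxE (negbTE ij).
split; first split => //.
- move=> i j ij; have [m [n [[mi mj _ _ _] _]]] := ord4_complement R ij.
  by apply: (@tangent_of_wform _ _ _ (E m)); rewrite ?E_wform // eq_sym.
- move=> i j k l p lt_ij lt_kl kl_neq on_i on_j on_k on_l.
  have [t [ij ti tj] [tk|tl]] := distinct_pairs_third lt_ij lt_kl kl_neq; subst t.
  + exact: (no_triple_point E_valid aug ij ti tj on_i on_j on_k).
  + exact: (no_triple_point E_valid aug ij ti tj on_i on_j on_l).
- have kk0 := formQD_curv_aug aug.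
  have [sk_lt0|sk_gt0] := ltrP (sumf (fun i => curv (E i))) 0; last first.
    by left; apply: interiors_disjoint_of_wform; rewrite // lt_def sum_curv_aug_neq0.
  right; apply: interiors_disjoint_of_wform.
  + by move=> i; apply: valid_reverse.
  + by move=> i j ij; rewrite wform_reverse E_wform.
  + by rewrite -kk0 /formQD /sumf !curv_reverse; ring.
  + by move: sk_lt0; rewrite /sumf !curv_reverse; lra.
Qed.

End DescartesOfAugmented.

Section Uniqueness.
Variable R : realType.
Implicit Types (C F : ocircle R) (D : 'I_4 -> ocircle R) (h c d : R).

Lemma MD_curv D i : MD D i p0 = curv (D i). Proof. by rewrite MD_WD mxE. Qed.
Lemma MD_curvx D i : MD D i p1 = curvx (D i). Proof. by rewrite MD_WD mxE. Qed.
Lemma MD_curvy D i : MD D i p2 = curvy (D i). Proof. by rewrite MD_WD mxE. Qed.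

Lemma circle_eq_of_coords C C' : valid_oc C -> valid_oc C' -> curv C != 0 ->
  curv C' = curv C -> curvx C' = curvx C -> curvy C' = curvy C -> C' = C.
Proof.
case: C => [x y r b|? ? ?] r_gt0 C'_valid k_neq0; last by rewrite /= eqxx in k_neq0.
case: C' C'_valid => [x' y' r' b'|? ? ?] r'_gt0 kE; last by rewrite -kE /= eqxx in k_neq0.
rewrite !curvx_circ !curvy_circ kE => /(mulfI k_neq0) -> /(mulfI k_neq0) ->.
clear k_neq0; move: kE r_gt0 r'_gt0; case: b; case: b' => /= kE r_gt0 r'_gt0.
  by rewrite (invr_inj kE).
all: have ir_gt0 : 0 < r^-1 by rewrite invr_gt0.
all: have ir'_gt0 : 0 < r'^-1 by rewrite invr_gt0.
- exfalso; lra.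
- exfalso; lra.
- by rewrite (invr_inj (oppr_inj kE)).
Qed.

Lemma line_offset_unique h1 h2 c d F : valid_oc F -> curv F != 0 ->
  wform (OLine h1 h2 c) F = -1 -> wform (OLine h1 h2 d) F = -1 -> c = d.
Proof.
case: F => [x y r b|? ? ?] F_valid; last by rewrite /= eqxx.
by rewrite !wform_lc //; move: (curv _) => k k_neq0 wc wd; apply: (mulfI k_neq0); lra.
Qed.

Lemma descartes_unique D D' : oriented_descartes D -> oriented_descartes D' ->
  MD D' = MD D -> D' =1 D.
Proof.
move=> od od' MDE.
have D_valid : forall i, valid_oc (D i) by case: od => [[]].
have D'_valid : forall i, valid_oc (D' i) by case: od' => [[]].
have coords i : [/\ curv (D' i) = curv (D i), curvx (D' i) = curvx (D i)
                  & curvy (D' i) = curvy (D i)] by rewrite -!MD_curv -!MD_curvx -!MD_curvy MDE.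
have circleE i : curv (D i) != 0 -> D' i = D i.
  by move=> k_neq0; have [] := coords i; apply: circle_eq_of_coords.
move=> i; have [ki0|] := eqVneq (curv (D i)) 0; last exact: circleE.
have [m km_neq0] : exists m, curv (D m) != 0.
  have [col0_neq0 _] := descartes_MD od.
  apply/existsP; apply: contraNT col0_neq0 => /existsPn k0; apply/eqP/matrixP => j l.
  rewrite (ord1 l) [col _ _ _ _]mxE [RHS]mxE (_ : 0 = p0); last exact: val_inj.
  by rewrite MD_curv; apply/eqP; rewrite -[_ == 0]negbK k0.
have mi : i != m by apply: contraNneq km_neq0 => <-; rewrite ki0.
have [ki'0 hx hy] := coords i; rewrite ki0 in ki'0.
have [h1 [h2 [c Di]]] := line_of_curv0 (D_valid i) ki0.
have [g1 [g2 [d D'i]]] := line_of_curv0 (D'_valid i) ki'0.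
move: hx hy (wform_descartes od mi) (wform_descartes od' mi).
rewrite Di D'i (circleE m km_neq0) /= => -> -> wc wd.
by rewrite (line_offset_unique (D_valid m) km_neq0 wc wd).
Qed.

End Uniqueness.

Theorem theorem3p1 (R : realType) :
  (forall D : 'I_4 -> ocircle R, oriented_descartes D ->
     col 0 (MD D) != 0 /\ (MD D)^T *m QD R *m MD D = W3 R) /\
  (forall M : 'M[R]_(4, 3), col 0 M != 0 -> M^T *m QD R *m M = W3 R ->
     exists D : 'I_4 -> ocircle R,
       [/\ oriented_descartes D, MD D = M &
           forall D' : 'I_4 -> ocircle R,
             oriented_descartes D' -> MD D' = M -> forall i, D' i = D i]).
Proof.
split; first exact: descartes_MD.
move=> M M_col0 M_gram; pose D := config_of_mx M.
have od : oriented_descartes D.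
  apply: oriented_descartes_of_aug; first exact: config_of_mx_valid.
  by rewrite WD_config_of_mx // W_of_mx_aug.
exists D; split=> //; first exact: MD_config_of_mx.
by move=> D' od' MD'E; apply: descartes_unique; rewrite // MD'E MD_config_of_mx.
Qed.
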